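(* Run Variation-aware UCRL for $T$ steps, and assume that for every episode $k$ (started at a step $t_k\le T$) the plausible set $\mathcal M_k$ contains all MDPs $M_\tau$, $\tau=1,\dots,T$. Then for all such $k$ and all states $s$, \[v^*_T(s)\le T\tilde\rho_k+D.\]
   Context: Let $\mathcal S$ be a finite set of $S$ states and $\mathcal A$ a finite set of $A$ actions. A (time-homogeneous) MDP has mean rewards $\bar r(s,a)\in[0,1]$ and transition probabilities $p(\cdot\mid s,a)$; it is communicating if every state can be reached from every other with positive probability by suitable actions; its diameter is $\max_{s\ne s'}\min_\pi\mathbb E[T(s'\mid s,\pi)]$ with $T(s'\mid s,\pi)$ the first time $s'$ is reached from $s$ under stationary policy $\pi$. $\rho(M,\pi)=\lim_{n}\frac1n\mathbb E[\sum_{t=1}^nr_t]$, $\rho^*(M)=\max_\pi\rho(M,\pi)$. Changing environment: for every step $t$ there is an MDP $M_t=(\mathcal S,\mathcal A,\bar r_t,p_t,s_1)$ (fixed in advance); at step $t$ in state $s_t$ the learner chooses $a_t$, receives a reward $r_t\in[0,1]$ with mean $\bar r_t(s_t,a_t)$, and moves to $s_{t+1}\sim p_t(\cdot\mid s_t,a_t)$. Every $M_t$ is communicating with diameter at most $D$. $v^*_T(s)$ is the maximal expected sum of the first $T$ rewards achievable by any (possibly time- and history-dependent) policy started in $s$ in this environment. Variation-aware UCRL (inputs $\delta\in(0,1)$, $\tilde V^r,\tilde V^p\ge0$) proceeds in episodes $k=1,2,\dots$ starting at steps $t_k$ ($t_1=1$). $N_k(s,a)$ is the number of steps $\tau<t_k$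 with $(s_\tau,a_\tau)=(s,a)$; $\hat r_k(s,a)=\sum_{\tau<t_k}r_\tau\mathbb 1\{s_\tau=s,a_\tau=a\}/\max(1,N_k(s,a))$, $\hat p_k(s'\mid s,a)=\#\{\tau<t_k:s_\tau=s,a_\tau=a,s_{\tau+1}=s'\}/\max(1,N_k(s,a))$. The plausible set $\mathcal M_k$ consists of all MDPs with rewards $\tilde r$, transitions $\tilde p$ satisfying for all $(s,a)$: $|\tilde r(s,a)-\hat r_k(s,a)|\le\tilde V^r+\sqrt{8\log(8SAt_k^3/\delta)/\max(1,N_k(s,a))}$ and $\|\tilde p(\cdot\mid s,a)-\hat p_k(\cdot\mid s,a)\|_1\le\tilde V^p+\sqrt{8S\log(8SAt_k^3/\delta)/\max(1,N_k(s,a))}$. The optimistic value is $\tilde\rho_k=\max_{M'\in\mathcal M_k}\rho^*(M')$; the algorithm plays an optimal policy of a maximizing MDP $\tilde M_k\in\mathcal M_k$ during episode $k$, which lasts as long as $v_k(s_t,\tilde\pi_k(s_t))<\max(1,N_k(s_t,\tilde\pi_k(s_t)))$ where $v_k$ counts visits in episode $k$. *)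

From mathcomp Require Import all_boot all_order all_algebra.
From mathcomp Require Import all_classical all_reals all_analysis.
Set Implicit Arguments.
Unset Strict Implicit.
Unset Printing Implicit Defensive.
Import Order.TTheory GRing.Theory Num.Theory.
Local Open Scope ring_scope.
Local Open Scope classical_set_scope.

Section MDP.
Context {R : realType} {S A : finType}.

Definition is_reward (r : S -> A -> R) : Prop :=
  forall s a, 0 <= r s a <= 1.

Definition is_kernel (p : S -> A -> S -> R) : Prop :=
  forall s a, (forall s', 0 <= p s a s') /\ \sum_(s' : S) p s a s' = 1.

Fixpoint state_dist (p : S -> A -> S -> R) (pi : S -> A) (s0 : S) (n : nat)
  : S -> R :=
  match n with
  | 0 => fun s => (s == s0)%:R
  | n'.+1 => fun s' => \sum_(s : S) state_dist p pi s0 n' s * p s (pi s) s'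
  end.

Definition exp_reward_sum (r : S -> A -> R) (p : S -> A -> S -> R)
  (pi : S -> A) (s0 : S) (n : nat) : R :=
  \sum_(0 <= t < n) \sum_(s : S) state_dist p pi s0 t s * r s (pi s).

Definition gain (r : S -> A -> R) (p : S -> A -> S -> R) (pi : S -> A)
  (s0 : S) : R :=
  limn (fun n : nat => ((n%:R)^-1 * exp_reward_sum r p pi s0 n : R^o)).

Definition rho_star (r : S -> A -> R) (p : S -> A -> S -> R) (s0 : S) : R :=
  sup [set gain r p pi s0 | pi in [set: S -> A]].

(** Taboo distribution: mass at time n on paths started at s that have not
    visited s' at times 1..n (nor at time 0). *)
Fixpoint taboo (p : S -> A -> S -> R) (pi : S -> A) (s s' : S) (n : nat)
  : S -> R :=
  match n with
  | 0 => fun y => (y == s)%:R * (y != s')%:R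
  | n'.+1 => fun y =>
      (y != s')%:R * \sum_(x : S) taboo p pi s s' n' x * p x (pi x) y
  end.

Definition prob_not_hit (p : S -> A -> S -> R) (pi : S -> A) (s s' : S)
  (n : nat) : R := \sum_(y : S) taboo p pi s s' n y.

(** E[T(s'|s,pi)] = sum_{n>=0} P(T > n), possibly +oo. *)
Definition exp_hit_time (p : S -> A -> S -> R) (pi : S -> A) (s s' : S)
  : \bar R := (\sum_(n <oo) (prob_not_hit p pi s s' n)%:E)%E.

(** Diameter: max_{s <> s'} min_pi E[T(s'|s,pi)]  (0 if |S| <= 1). *)
Definition diameter (p : S -> A -> S -> R) : \bar R :=
  ereal_sup ([set 0%E] `|`
    [set ereal_inf [set exp_hit_time p pi ss.1 ss.2 | pi in [set: S -> A]]
      | ss in [set ss : S * S | ss.1 != ss.2]]).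

Definition communicating (p : S -> A -> S -> R) : Prop :=
  forall s s', s != s' ->
    exists (pi : S -> A) (n : nat), 0 < 1 - prob_not_hit p pi s s' n.

(** Changing environment: r t, p t for t >= 1 are the mean rewards and
    transitions of M_t.  History-dependent randomized policies. *)
Definition hpolicy := seq (S * A) -> S -> A -> R.

Definition is_hpolicy (pi : hpolicy) : Prop :=
  forall h x, (forall a, 0 <= pi h x a) /\ \sum_(a : A) pi h x a = 1.

Fixpoint exp_return (r : nat -> S -> A -> R) (p : nat -> S -> A -> S -> R)
  (pi : hpolicy) (n t : nat) (h : seq (S * A)) (x : S) : R :=
  match n with
  | 0 => 0
  | n'.+1 => \sum_(a : A) pi h x a *
      (r t x a + \sum_(y : S) p t x a y *
                   exp_return r p pi n' t.+1 (rcons h (x, a)) y)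
  end.

Definition vstar (r : nat -> S -> A -> R) (p : nat -> S -> A -> S -> R)
  (T : nat) (s : S) : R :=
  sup [set exp_return r p pi T 1 [::] s | pi in is_hpolicy].

(** Empirical quantities at episode start tk, from the run's history:
    st tau = s_tau, act tau = a_tau, rew tau = r_tau (tau >= 1). *)
Definition Ncount (st : nat -> S) (act : nat -> A) (tk : nat) (s : S) (a : A)
  : nat := \sum_(1 <= tau < tk) ((st tau == s) && (act tau == a) : nat).

Definition rhat (st : nat -> S) (act : nat -> A) (rew : nat -> R) (tk : nat)
  (s : S) (a : A) : R :=
  (\sum_(1 <= tau < tk) ((st tau == s) && (act tau == a))%:R * rew tau)
    / (maxn 1 (Ncount st act tk s a))%:R.

Definition phat (st : nat -> S) (act : nat -> A) (tk : nat)
  (s : S) (a : A) (s' : S) : R :=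
  (\sum_(1 <= tau < tk)
      ((st tau == s) && (act tau == a) && (st tau.+1 == s'))%:R)
    / (maxn 1 (Ncount st act tk s a))%:R.

Definition log_term (delta : R) (tk : nat) : R :=
  ln (8 * #|S|%:R * #|A|%:R * tk%:R ^+ 3 / delta).

Definition plausible (delta Vr Vp : R) (st : nat -> S) (act : nat -> A)
  (rew : nat -> R) (tk : nat)
  (r' : S -> A -> R) (p' : S -> A -> S -> R) : Prop :=
  is_reward r' /\ is_kernel p' /\
  forall s a,
    `| r' s a - rhat st act rew tk s a |
      <= Vr + Num.sqrt (8 * log_term delta tk
                        / (maxn 1 (Ncount st act tk s a))%:R) /\
    \sum_(s' : S) `| p' s a s' - phat st act tk s a s' |
      <= Vp + Num.sqrt (8 * #|S|%:R * log_term delta tk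
                        / (maxn 1 (Ncount st act tk s a))%:R).

(** Optimistic value rho~_k = max_{M' in M_k} rho*(M'); the MDPs of M_k have
    initial state s1. *)
Definition rho_tilde (delta Vr Vp : R) (st : nat -> S) (act : nat -> A)
  (rew : nat -> R) (tk : nat) (s1 : S) : R :=
  sup [set rho_star rp.1 rp.2 s1
      | rp in [set rp : (S -> A -> R) * (S -> A -> S -> R)
               | plausible delta Vr Vp st act rew tk rp.1 rp.2]].

End MDP.

From mathcomp Require Import all_boot all_order all_algebra.
From mathcomp Require Import all_classical all_reals all_analysis.
From mathcomp Require Import ring lra.
Import Order.TTheory GRing.Theory Num.Theory.
Local Open Scope ring_scope.
Local Open Scope classical_set_scope.
Set Implicit Arguments.
Unset Strict Implicit.
Unset Printing Implicit Defensive.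

(* Fix a discount g < 1 and let V be the optimal g-discounted value of the union MDP in which,
   at every state, any action may be played with the rewards and transitions of any M_t, t <= T.
   V satisfies the Bellman inequality for every M_t, so no history-dependent policy collects more
   than V s - min V + T (1 - g) max V in T steps. As (1 - g) V <= 1 and V is superharmonic for
   every M_t, the span of V is at most the diameter bound D. The optimal stationary policy of the union
   MDP picks a pair (a, t) at each state; gluing the corresponding parts of the M_t gives an MDP
   in the plausible set whose gain is at least (1 - g) min V, so (1 - g) min V <= rho~_k. Hence
   v*_T(s) <= T rho~_k + D + T (1 - g) D, and letting g tend to 1 gives the claim. *)

Lemma le0_of_natmul_bounded (R : realType) (a C : R) :
  (forall k : nat, k%:R * a <= C) -> a <= 0.
Proof.
move=> H; rewrite leNgt; apply/negP => a0.
have C0 : 0 <= C by have := H 0%N; rewrite mul0r.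
have := archi_boundP (divr_ge0 C0 (ltW a0)).
by rewrite ltr_pdivrMr // => /lt_le_trans /(_ (H _)); rewrite ltxx.
Qed.

Lemma le_of_le_add_invn (R : realType) (x y c : R) :
  (forall k : nat, x <= y + c / k.+1%:R) -> x <= y.
Proof.
move=> H; rewrite -subr_le0; apply: (le0_of_natmul_bounded (C := c - (x - y))) => k.
have k0 : (0 : R) < k.+1%:R by rewrite ltr0n.
have : k.+1%:R * (x - y) <= c by rewrite mulrC -ler_pdivlMr // lerBlDl; exact: H.
by rewrite mulrSr mulrDl mul1r; lra.
Qed.

Lemma ex_argmin (R : realDomainType) (I : finType) (f : I -> R) (i0 : I) :
  exists i, forall j, f i <= f j.
Proof. by case: (arg_minP f (P := predT) (i0 := i0) isT) => i _ H; exists i => j; apply: H. Qed.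

Lemma ex_argmax (R : realDomainType) (I : finType) (f : I -> R) (i0 : I) :
  exists i, forall j, f j <= f i.
Proof. by case: (arg_maxP f (P := predT) (i0 := i0) isT) => i _ H; exists i => j; apply: H. Qed.

Lemma sup_le_nonneg (R : realType) (E : set R) (b : R) :
  (forall x, E x -> x <= b) -> 0 <= b -> sup E <= b.
Proof.
move=> Eb b0; have [[x Ex]|E0] := pselect (E !=set0); first by apply: ge_sup; [exists x|].
suff -> : E = set0 by rewrite sup0.
by apply/seteqP; split => x // Ex; apply: E0; exists x.
Qed.

Lemma sup_ge0 (R : realType) (E : set R) :
  (forall x, E x -> 0 <= x <= 1) -> 0 <= sup E.
Proof.
move=> E01; have [[x Ex]|E0] := pselect (E !=set0).
  have /andP[x0 _] := E01 x Ex; apply: le_trans x0 (ub_le_sup _ Ex).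
  by exists 1 => y /E01 /andP[].
suff -> : E = set0 by rewrite sup0.
by apply/seteqP; split => x // Ex; apply: E0; exists x.
Qed.

Lemma sum_indicator_mul (R : pzSemiRingType) (I : finType) (i : I) (x : I -> R) :
  \sum_(j : I) (i == j)%:R * x j = x i.
Proof.
rewrite (bigD1 i) //= eqxx mul1r big1 ?addr0 // => j /negbTE.
by rewrite eq_sym => ->; rewrite mul0r.
Qed.

Lemma norm_le_sum_norm (R : numDomainType) (I : finType) (x : I -> R) (i : I) :
  `|x i| <= \sum_(j : I) `|x j|.
Proof. by rewrite (bigD1 i) //= lerDl; apply: sumr_ge0 => j _. Qed.

Section KernelAction.
Variables (R : fieldType) (S : finType).
Implicit Types (K : S -> S -> R) (x y : S -> R).

Definition kmul K x : S -> R := fun s => \sum_(t : S) K s t * x t.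

Lemma kmulD K x y s : kmul K (fun t => x t + y t) s = kmul K x s + kmul K y s.
Proof. by rewrite /kmul -big_split; apply: eq_bigr => t _; rewrite mulrDr. Qed.

Lemma kmulZ K c x s : kmul K (fun t => c * x t) s = c * kmul K x s.
Proof. by rewrite /kmul mulr_sumr; apply: eq_bigr => t _; rewrite mulrCA. Qed.

Lemma kmulN K x s : kmul K (fun t => - x t) s = - kmul K x s.
Proof. by rewrite /kmul -sumrN; apply: eq_bigr => t _; rewrite mulrN. Qed.

Local Notation n := #|S|.

Definition kmx K : 'M[R]_n := \matrix_(i, j) K (enum_val j) (enum_val i).
Definition vec x : 'rV[R]_n := \row_i x (enum_val i).
Definition unvec (v : 'rV[R]_n) : S -> R := fun s => v 0 (enum_rank s).

Lemma vecK : cancel vec unvec.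
Proof. by move=> x; apply: funext => s; rewrite /unvec /vec mxE enum_rankK. Qed.

Lemma unvecK : cancel unvec vec.
Proof. by move=> v; apply/rowP => i; rewrite /vec /unvec mxE enum_valK. Qed.

Lemma vec_kmul K x : vec (kmul K x) = vec x *m kmx K.
Proof.
apply/rowP => j; rewrite !mxE /kmul (big_enum_val (A := S)) /=.
by apply: eq_bigr => i _; rewrite !mxE mulrC.
Qed.

Lemma vec_eq0 x : x =1 (fun=> 0) -> vec x = 0.
Proof. by move=> x0; apply/rowP => i; rewrite !mxE x0. Qed.

Lemma unvec_eq0 (v : 'rV[R]_n) : unvec v =1 (fun=> 0) -> v = 0.
Proof. by move/vec_eq0; rewrite unvecK. Qed.

Lemma kmul_surj_of_inj K :
  (forall x, kmul K x =1 (fun=> 0) -> x =1 (fun=> 0)) ->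
  forall b, exists x, kmul K x =1 b.
Proof.
move=> inj b.
have /eqP ker0 : kermx (kmx K) == 0.
  apply/eqP/row_matrixP => i; rewrite row0; apply/unvec_eq0/inj => s.
  by rewrite -[kmul _ _]vecK vec_kmul unvecK -row_mul mulmx_ker row0 /unvec mxE.
have Ku : kmx K \in unitmx by rewrite -row_free_unit -kermx_eq0 ker0.
exists (unvec (vec b *m invmx (kmx K))) => s.
by rewrite -[kmul _ _]vecK vec_kmul unvecK mulmxKV // vecK.
Qed.

Lemma kernel_range_decomposition K :
  (forall x y, kmul K y =1 (fun=> 0) -> kmul K x =1 y -> y =1 (fun=> 0)) ->
  forall b, exists u w, kmul K u =1 (fun=> 0) /\ b =1 (fun s => u s + kmul K w s).
Proof.
move=> hyp b; set k := kermx (kmx K).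
have cap0 : (k :&: kmx K)%MS = 0.
  apply/row_matrixP => i; rewrite row0; set y := row i _.
  have /sub_kermxP yk : (y <= k)%MS by apply: submx_trans (row_sub i _) (capmxSl _ _).
  have /submxP [x ex] : (y <= kmx K)%MS by apply: submx_trans (row_sub i _) (capmxSr _ _).
  apply: unvec_eq0; apply: (hyp (unvec x)) => s.
    by rewrite -[kmul _ _]vecK vec_kmul unvecK yk /unvec mxE.
  by rewrite -[kmul _ _]vecK vec_kmul unvecK -ex.
have full : row_full (k + kmx K)%MS.
  have := mxrank_sum_cap k (kmx K); rewrite cap0 mxrank0 addn0 /k mxrank_ker.
  by rewrite subnK ?rank_leq_row // => e; rewrite /row_full e.
have /sub_addsmxP [[u1 u2] /= eb] : (vec b <= k + kmx K)%MS by apply: submx_full.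
exists (unvec (u1 *m k)), (unvec u2); split => s.
  by rewrite -[kmul _ _]vecK vec_kmul unvecK -mulmxA mulmx_ker mulmx0 /unvec mxE.
by rewrite -[kmul _ _]vecK vec_kmul unvecK -{1}[b]vecK eb /unvec !mxE.
Qed.

End KernelAction.

Section Stochastic.
Variables (R : realType) (S : finType).
Implicit Types (P : S -> S -> R) (x y : S -> R).

Definition stoch P := forall s, (forall t, 0 <= P s t) /\ \sum_(t : S) P s t = 1.

Variables (P : S -> S -> R) (sP : stoch P).

Lemma kmulC c s : kmul P (fun=> c) s = c.
Proof. by have [_ P1] := sP s; rewrite /kmul -mulr_suml P1 mul1r. Qed.

Lemma kmul_le x c s : (forall t, x t <= c) -> kmul P x s <= c.
Proof.
have [P0 _] := sP s => xc; rewrite -(kmulC c s).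
by apply: ler_sum => t _; apply: ler_wpM2l.
Qed.

Lemma kmul_ge x c s : (forall t, c <= x t) -> c <= kmul P x s.
Proof.
have [P0 _] := sP s => xc; rewrite -(kmulC c s).
by apply: ler_sum => t _; apply: ler_wpM2l.
Qed.

(* P x = x + y with y harmonic gives P^k x = x + k y, bounded in k. *)
Lemma harmonic_increment_eq0 x y :
  (forall s, kmul P y s = y s) -> (forall s, kmul P x s = x s + y s) ->
  y =1 (fun=> 0).
Proof.
move=> Py Px s.
have iterE k : iter k (kmul P) x = (fun t => x t + k%:R * y t).
  elim: k => [|k IH] /=; first by apply: funext => t; rewrite mul0r addr0.
  rewrite IH; apply: funext => t.
  by rewrite kmulD kmulZ Px Py -addrA mulrS mulrDl mul1r.
set c := \sum_(t : S) `|x t|.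
have iter_bounded k t : `|iter k (kmul P) x t| <= c.
  elim: k t => [|k IH] t /=; first exact: norm_le_sum_norm.
  rewrite ler_norml; apply/andP; split.
    by apply: kmul_ge => z; have := IH z; rewrite ler_norml => /andP[].
  by apply: kmul_le => z; have := IH z; rewrite ler_norml => /andP[].
apply/eqP; rewrite -normr_le0; apply: (le0_of_natmul_bounded (C := c + c)) => k.
have -> : k%:R * `|y s| = `|iter k (kmul P) x s - x s|.
  by rewrite iterE addrAC subrr add0r normrM ger0_norm ?ler0n.
by apply: le_trans (ler_normB _ _) _; apply: lerD; [|exact: norm_le_sum_norm].
Qed.

Lemma poisson_decomposition f : exists u w,
  (forall s, kmul P u s = u s) /\ (forall s, f s = u s + (kmul P w s - w s)).
Proof.
set K := fun s t => P s t - (s == t)%:R.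
have KE x s : kmul K x s = kmul P x s - x s.
  rewrite /kmul /K; under eq_bigr do rewrite mulrBl.
  by rewrite sumrB sum_indicator_mul.
have [|u [w [hu hf]]] := kernel_range_decomposition (K := K) _ f.
  move=> x y hy hx; apply: (harmonic_increment_eq0 (x := x)) => s.
    by apply/eqP; rewrite -subr_eq0 -KE hy.
  by rewrite -hx KE addrC subrK.
exists u, w; split => s; last by rewrite hf KE.
by apply/eqP; rewrite -subr_eq0 -KE hu.
Qed.

Variables (g : R) (hg : 0 <= g < 1).

(* At a minimum of x, x <= P x, so (1 - g) x >= d >= 0 there. *)
Lemma discounted_fixpoint_ge0 x d :
  (forall s, x s = d s + g * kmul P x s) -> (forall s, 0 <= d s) ->
  forall s, 0 <= x s.
Proof.
have /andP[g0 g1] := hg => ex d0 s.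
have [m hm] := ex_argmin x s.
suff : 0 <= (1 - g) * x m by rewrite pmulr_rge0 ?subr_gt0 // => xm0; apply: le_trans xm0 (hm s).
have : g * x m <= g * kmul P x m by apply/ler_wpM2l/kmul_ge.
by have := ex m; have := d0 m; lra.
Qed.

Lemma discounted_value_exists rho : exists V, forall s, V s = rho s + g * kmul P V s.
Proof.
set K := fun s t => (s == t)%:R - g * P s t.
have KE x s : kmul K x s = x s - g * kmul P x s.
  rewrite /kmul /K; under eq_bigr do rewrite mulrBl -mulrA.
  by rewrite sumrB sum_indicator_mul mulr_sumr.
have [|V hV] := kmul_surj_of_inj (K := K) _ rho.
  move=> x hx s; apply/eqP; rewrite eq_le; apply/andP; split.
    rewrite -oppr_ge0.
    apply: (discounted_fixpoint_ge0 (x := fun t => - x t) (d := fun=> 0)) => // t.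
    by rewrite kmulN add0r mulrN; congr (- _); apply/eqP; rewrite -subr_eq0 -KE hx.
  apply: (discounted_fixpoint_ge0 (d := fun=> 0)) => // t.
  by rewrite add0r; apply/eqP; rewrite -subr_eq0 -KE hx.
by exists V => s; rewrite -hV KE subrK.
Qed.

End Stochastic.

Lemma limn_div_affine (R : realType) (a : nat -> R) (c K : R) :
  (forall n, `|a n - n%:R * c| <= K) ->
  limn (fun n : nat => ((n%:R)^-1 * a n : R^o)) = c.
Proof.
move=> aK; apply: (cvg_lim _ (_ : _ @ \oo --> (c : R^o))) => //.
apply/cvgrPdist_le => e e0; have K0 : 0 <= K by apply: le_trans (aK 0%N).
near=> n.
have n0 : (0 < n)%N by near: n; exists 1%N.
have nK : K / e < n%:R.
  apply: lt_le_trans (archi_boundP (divr_ge0 K0 (ltW e0))) _; rewrite ler_nat.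
  by near: n; exists (Num.bound (K / e)).
have -> : c - n%:R^-1 * a n = - (n%:R^-1 * (a n - n%:R * c)).
  by rewrite mulrBr mulrA mulVf ?pnatr_eq0 -?lt0n // mul1r opprB.
rewrite normrN normrM ger0_norm ?invr_ge0 ?ler0n // -ler_pdivlMl ?invr_gt0 ?ltr0n //.
rewrite invrK; apply: le_trans (aK n) _.
by rewrite -ler_pdivrMr //; exact: ltW.
Unshelve. all: end_near.
Qed.

Section Gain.
Variables (R : realType) (S A : finType).
Implicit Types (r : S -> A -> R) (p : S -> A -> S -> R) (pi : S -> A) (f : S -> R).

Definition pker p pi : S -> S -> R := fun s t => p s (pi s) t.

Lemma stoch_pker p pi : is_kernel p -> stoch (pker p pi).
Proof. by move=> kp s; apply: kp. Qed.

Definition expect p pi s0 t f := \sum_(s : S) state_dist p pi s0 t s * f s.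

Lemma exp_reward_sumE r p pi s0 n :
  exp_reward_sum r p pi s0 n = \sum_(0 <= t < n) expect p pi s0 t (fun s => r s (pi s)).
Proof. by []. Qed.

Lemma state_dist_ge0 p pi s0 t s : is_kernel p -> 0 <= state_dist p pi s0 t s.
Proof.
move=> kp; elim: t s => [|t IH] s /=; first by rewrite ler0n.
by apply: sumr_ge0 => x _; apply: mulr_ge0 => //; have [] := kp x (pi x).
Qed.

Lemma expect0 p pi s0 f : expect p pi s0 0 f = f s0.
Proof. by rewrite /expect /=; under eq_bigr do rewrite eq_sym; rewrite sum_indicator_mul. Qed.

Lemma expectS p pi s0 t f : expect p pi s0 t.+1 f = expect p pi s0 t (kmul (pker p pi) f).
Proof.
rewrite /expect /kmul /pker /=; under eq_bigr do rewrite mulr_suml.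
rewrite exchange_big /=; apply: eq_bigr => x _.
by rewrite mulr_sumr; apply: eq_bigr => y _; rewrite mulrA.
Qed.

Lemma expectD p pi s0 t f f' :
  expect p pi s0 t (fun s => f s + f' s) = expect p pi s0 t f + expect p pi s0 t f'.
Proof. by rewrite /expect -big_split; apply: eq_bigr => s _; rewrite mulrDr. Qed.

Lemma expectN p pi s0 t f : expect p pi s0 t (fun s => - f s) = - expect p pi s0 t f.
Proof. by rewrite /expect -sumrN; apply: eq_bigr => s _; rewrite mulrN. Qed.

Lemma expect_le p pi s0 t f c :
  is_kernel p -> (forall s, f s <= c) -> expect p pi s0 t f <= c.
Proof.
move=> kp; elim: t f => [|t IH] f fc; first by rewrite expect0.
by rewrite expectS; apply: IH => s; apply: kmul_le => //; apply: stoch_pker.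
Qed.

Lemma expect_ge p pi s0 t f c :
  is_kernel p -> (forall s, c <= f s) -> c <= expect p pi s0 t f.
Proof.
move=> kp; elim: t f => [|t IH] f fc; first by rewrite expect0.
by rewrite expectS; apply: IH => s; apply: kmul_ge => //; apply: stoch_pker.
Qed.

Lemma ler_expect p pi s0 t f f' :
  is_kernel p -> (forall s, f s <= f' s) -> expect p pi s0 t f <= expect p pi s0 t f'.
Proof. by move=> kp ff'; apply: ler_sum => s _; apply/ler_wpM2l/ff'/state_dist_ge0. Qed.

Lemma expect_harmonic p pi s0 t f :
  (forall s, kmul (pker p pi) f s = f s) -> expect p pi s0 t f = f s0.
Proof.
move=> hf; elim: t => [|t IH]; first by rewrite expect0.
by rewrite expectS -IH /expect; apply: eq_bigr => s _; rewrite hf.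
Qed.

(* The Poisson decomposition r = u + (P w - w) with P u = u makes the sum telescope:
   E[sum_{t<n} r_t] = n u(s0) + E_n w - w(s0). *)
Lemma exp_reward_sum_affine r p pi s0 : is_kernel p ->
  exists c K, forall n, `|exp_reward_sum r p pi s0 n - n%:R * c| <= K.
Proof.
move=> kp; have sP := stoch_pker pi kp.
have [u [w [Pu hr]]] := poisson_decomposition sP (fun s => r s (pi s)).
have ersE n : exp_reward_sum r p pi s0 n =
    n%:R * u s0 + (expect p pi s0 n w - w s0).
  rewrite exp_reward_sumE.
  have step t : expect p pi s0 t (fun s => r s (pi s)) =
      u s0 + (expect p pi s0 t.+1 w - expect p pi s0 t w).
    have -> : (fun s => r s (pi s)) = (fun s => u s + (kmul (pker p pi) w s + - w s)).
      by apply: funext => s; rewrite hr.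
    by rewrite expectD expectD expectN expect_harmonic // expectS.
  under eq_bigr do rewrite step.
  by rewrite big_split /= telescope_sumr // expect0 sumr_const_nat subn0 mulr_natl.
set c := \sum_(t : S) `|w t|.
exists (u s0), (c + c) => n; rewrite ersE addrC addKr.
apply: le_trans (ler_normB _ _) _; apply: lerD; last exact: norm_le_sum_norm.
rewrite ler_norml; apply/andP; split.
  apply: expect_ge => // s; rewrite lerNl; apply: le_trans (norm_le_sum_norm w s).
  by rewrite -normrN ler_norm.
by apply: expect_le => // s; apply: le_trans (ler_norm _) (norm_le_sum_norm w s).
Qed.

Lemma gain_ge r p pi s0 c K : is_kernel p ->
  (forall n, n%:R * c - K <= exp_reward_sum r p pi s0 n) -> c <= gain r p pi s0.
Proof.
move=> kp H; have [g [Kg hK]] := exp_reward_sum_affine r pi s0 kp.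
rewrite /gain (limn_div_affine hK) -subr_le0.
apply: (le0_of_natmul_bounded (C := K + Kg)) => n.
by have := H n; have := hK n; rewrite ler_norml mulrBr => /andP[_]; lra.
Qed.

Lemma gain_le r p pi s0 c K : is_kernel p ->
  (forall n, exp_reward_sum r p pi s0 n <= n%:R * c + K) -> gain r p pi s0 <= c.
Proof.
move=> kp H; have [g [Kg hK]] := exp_reward_sum_affine r pi s0 kp.
rewrite /gain (limn_div_affine hK) -subr_le0.
apply: (le0_of_natmul_bounded (C := K + Kg)) => n.
by have := H n; have := hK n; rewrite ler_norml mulrBr => /andP[]; lra.
Qed.

Lemma gain_in01 r p pi s0 : is_reward r -> is_kernel p -> 0 <= gain r p pi s0 <= 1.
Proof.
move=> rr kp; have r01 s := rr s (pi s).
apply/andP; split; [apply: (gain_ge (K := 0)) | apply: (gain_le (K := 0))] => // n.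
  rewrite mulr0 subr0 exp_reward_sumE; apply: sumr_ge0 => t _.
  by apply: expect_ge => // s; have /andP[] := r01 s.
have -> : n%:R * 1 + 0 = \sum_(0 <= t < n) (1 : R) by rewrite sumr_const_nat subn0 mulr1 addr0.
rewrite exp_reward_sumE.
by apply: ler_sum => t _; apply: expect_le => // s; have /andP[] := r01 s.
Qed.

Lemma rho_star_in01 r p s0 : is_reward r -> is_kernel p -> 0 <= rho_star r p s0 <= 1.
Proof.
move=> rr kp; apply/andP; split.
  by apply: sup_ge0 => _ [pi _ <-]; apply: gain_in01.
by apply: sup_le_nonneg => // _ [pi _ <-]; have /andP[] := gain_in01 pi s0 rr kp.
Qed.

End Gain.

Section HittingTime.
Variables (R : realType) (S A : finType) (p : S -> A -> S -> R) (pi : S -> A).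
Hypothesis kp : is_kernel p.
Variables (s s' : S).
Hypothesis ss' : s != s'.

Local Notation tb := (taboo p pi s s').
Local Notation pnh := (prob_not_hit p pi s s').
Local Notation P := (pker p pi).

Definition first_hit (n : nat) : R := \sum_(x : S) tb n x * P x s'.

Lemma taboo_ge0 n y : 0 <= tb n y.
Proof.
elim: n y => [|n IH] y /=; first by apply: mulr_ge0; apply: ler0n.
apply/mulr_ge0/sumr_ge0 => [|x _]; first exact: ler0n.
by apply: mulr_ge0 => //; have [] := kp x (pi x).
Qed.

Lemma first_hit_ge0 n : 0 <= first_hit n.
Proof. by apply: sumr_ge0 => x _; apply: mulr_ge0 (taboo_ge0 _ _) ((kp x (pi x)).1 s'). Qed.

Lemma sum_taboo_kmul f n :
  \sum_(x : S) tb n x * kmul P f x = first_hit n * f s' + \sum_(y : S) tb n.+1 y * f y.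
Proof.
have -> : \sum_x tb n x * kmul P f x = \sum_y (\sum_x tb n x * P x y) * f y.
  rewrite /kmul; under eq_bigr do rewrite mulr_sumr.
  rewrite exchange_big; apply: eq_bigr => y _; rewrite mulr_suml.
  by apply: eq_bigr => x _; rewrite mulrA.
rewrite (bigD1 s') //= [X in _ = _ + X](bigD1 s') //= eqxx mul0r mul0r add0r.
by congr (_ + _); apply: eq_bigr => y ys; rewrite ys mul1r.
Qed.

Lemma prob_not_hitS n : pnh n = first_hit n + pnh n.+1.
Proof.
transitivity (\sum_x tb n x * kmul P (fun=> 1) x).
  by apply: eq_bigr => x _; rewrite kmulC ?mulr1 //; apply: stoch_pker.
by rewrite sum_taboo_kmul mulr1; congr (_ + _); apply: eq_bigr => y _; rewrite mulr1.
Qed.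

Lemma sum_taboo0 f : \sum_(y : S) tb 0 y * f y = f s.
Proof.
rewrite -(sum_indicator_mul s f); apply: eq_bigr => y _ /=.
by case: (eqVneq y s) => [->|_]; rewrite ?eqxx ?ss' ?mul1r ?mul0r.
Qed.

Lemma prob_not_hit0 : pnh 0 = 1.
Proof. by have := sum_taboo0 (fun=> 1); under eq_bigr do rewrite mulr1. Qed.

Lemma natmul_prob_not_hit_le n : n%:R * pnh n <= \sum_(0 <= k < n) pnh k.
Proof.
have mono k m : pnh (k + m)%N <= pnh k.
  elim: m => [|m IH]; first by rewrite addn0.
  by rewrite addnS; apply: le_trans IH; rewrite (prob_not_hitS (k + m)) lerDr first_hit_ge0.
have -> : n%:R * pnh n = \sum_(0 <= k < n) pnh n by rewrite sumr_const_nat subn0 mulr_natl.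
apply: ler_sum_nat => k /andP[_ kn].
by have := mono k (n - k)%N; rewrite subnKC // ltnW.
Qed.

Variables (g : R) (V : S -> R).
Hypotheses (V_ge0 : forall y, 0 <= V y) (V_le : forall y, (1 - g) * V y <= 1).
Hypothesis V_super : forall y, g * kmul P V y <= V y.

(* Following pi from s, V loses at most one unit per step before reaching s'. *)
Lemma superharmonic_taboo_invariant n :
  (1 - pnh n) * V s' + \sum_(y : S) tb n y * V y - \sum_(0 <= k < n) pnh k <= V s.
Proof.
elim: n => [|n IH]; first by rewrite prob_not_hit0 sum_taboo0 big_geq // subrr mul0r add0r subr0.
have step : first_hit n * V s' + \sum_y tb n.+1 y * V y - pnh n <= \sum_y tb n y * V y.
  have h1 : g * (first_hit n * V s' + \sum_y tb n.+1 y * V y) <= \sum_y tb n y * V y.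
    rewrite -sum_taboo_kmul mulr_sumr; apply: ler_sum => y _.
    by rewrite mulrCA; apply: ler_wpM2l => //; apply: taboo_ge0.
  have h2 : (1 - g) * (first_hit n * V s') <= first_hit n.
    by rewrite mulrCA; apply: ler_piMr => //; apply: first_hit_ge0.
  have h3 : (1 - g) * \sum_y tb n.+1 y * V y <= pnh n.+1.
    rewrite mulr_sumr; apply: ler_sum => y _.
    by rewrite mulrCA; apply: ler_piMr => //; apply: taboo_ge0.
  by have := prob_not_hitS n; nra.
rewrite big_nat_recr //=; move: IH step; rewrite (prob_not_hitS n); lra.
Qed.

Lemma superharmonic_sub_le e :
  (forall n, \sum_(0 <= k < n) pnh k <= e) -> V s' - V s <= e.
Proof.
move=> He; rewrite -subr_le0; apply: (le0_of_natmul_bounded (C := e * V s')) => n.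
have Ebd : V s' - V s - e <= pnh n * V s'.
  have := superharmonic_taboo_invariant n; have := He n.
  have : 0 <= \sum_y tb n y * V y by apply: sumr_ge0 => y _; apply: mulr_ge0 (taboo_ge0 _ _) _.
  lra.
apply: le_trans (_ : n%:R * (pnh n * V s') <= _); first by apply: ler_wpM2l.
by rewrite mulrA; apply: ler_wpM2r => //; apply: le_trans (He n); apply: natmul_prob_not_hit_le.
Qed.

End HittingTime.

Lemma diameter_ge0 (R : realType) (S A : finType) (p : S -> A -> S -> R) D :
  (diameter p <= D%:E)%E -> 0 <= D.
Proof. by rewrite -lee_fin; apply: le_trans; apply: ereal_sup_ubound; left. Qed.

Lemma diameter_span (R : realType) (S A : finType) (p : S -> A -> S -> R) D g (V : S -> R) :
  is_kernel p -> (diameter p <= D%:E)%E ->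
  (forall y, 0 <= V y) -> (forall y, (1 - g) * V y <= 1) ->
  (forall y a, g * \sum_(z : S) p y a z * V z <= V y) ->
  forall s s', V s' - V s <= D.
Proof.
move=> kp pD V0 V1 Vsup s s'.
have [<-|ss'] := eqVneq s s'; first by rewrite subrr (diameter_ge0 pD).
apply/ler_addgt0Pr => e e0.
have : (ereal_inf [set exp_hit_time p pi s s' | pi in [set: S -> A]] < (D + e)%:E)%E.
  apply: le_lt_trans (le_trans (ereal_sup_ubound _) pD) _; last by rewrite lte_fin ltrDl.
  by right; exists (s, s').
case/ereal_inf_lt => _ [pi _ <-] hpi.
apply: (superharmonic_sub_le kp ss' V0 V1 (fun y => Vsup y (pi y))) => n.
have : (\sum_(0 <= k < n) (prob_not_hit p pi s s' k)%:E <= exp_hit_time p pi s s')%E.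
  apply: nneseries_lim_ge => k _ _; rewrite lee_fin; apply: sumr_ge0 => y _.
  exact: taboo_ge0.
by move=> /le_lt_trans /(_ hpi); rewrite sumEFin lte_fin => /ltW.
Qed.

Section UnionMDP.
Variables (R : realType) (S A : finType).
Variables (r : nat -> S -> A -> R) (p : nat -> S -> A -> S -> R) (T : nat) (D g : R).
Hypothesis rp_t : forall t, (0 < t)%N -> is_reward (r t) /\ is_kernel (p t).
Hypothesis diameter_t : forall t, (0 < t)%N -> (diameter (p t) <= D%:E)%E.
Hypothesis g01 : 0 <= g < 1.
Variable b0 : A * 'I_T.

(* Action (a, i) plays a with the rewards and transitions of M_(i+1). *)
Definition union_reward (s : S) (b : A * 'I_T) : R := r b.2.+1 s b.1.
Definition union_kernel (s : S) (b : A * 'I_T) (y : S) : R := p b.2.+1 s b.1 y.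

Lemma union_reward_in01 s b : 0 <= union_reward s b <= 1.
Proof. exact: (rp_t (ltn0Sn b.2)).1. Qed.

Lemma union_kernel_is_kernel : is_kernel union_kernel.
Proof. by move=> s b; apply: (rp_t (ltn0Sn b.2)).2. Qed.

Local Notation Psig sig := (pker union_kernel (sig : {ffun S -> A * 'I_T})).

Lemma stoch_Psig (sig : {ffun S -> A * 'I_T}) : stoch (Psig sig).
Proof. exact/stoch_pker/union_kernel_is_kernel. Qed.

Definition disc_value (sig : {ffun S -> A * 'I_T}) : S -> R :=
  projT1 (cid (discounted_value_exists (stoch_Psig sig) g01
                 (fun s => union_reward s (sig s)))).

Lemma disc_valueE sig s :
  disc_value sig s = union_reward s (sig s) + g * kmul (Psig sig) (disc_value sig) s.
Proof. by rewrite /disc_value; case: cid. Qed.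

Definition opt_policy : {ffun S -> A * 'I_T} :=
  projT1 (cid (ex_argmax (fun sig => \sum_(s : S) disc_value sig s) [ffun=> b0])).

Lemma opt_policy_max sig :
  \sum_(s : S) disc_value sig s <= \sum_(s : S) disc_value opt_policy s.
Proof. by rewrite /opt_policy; case: cid. Qed.

Definition opt_value := disc_value opt_policy.
Local Notation V := opt_value.

Lemma opt_valueE s :
  V s = union_reward s (opt_policy s) + g * kmul (Psig opt_policy) V s.
Proof. exact: disc_valueE. Qed.

Lemma opt_value_ge0 s : 0 <= V s.
Proof.
apply: (discounted_fixpoint_ge0 (stoch_Psig opt_policy) g01 opt_valueE) => u.
by have /andP[] := union_reward_in01 u (opt_policy u).
Qed.

Lemma opt_value_le s : (1 - g) * V s <= 1.
Proof.
rewrite -subr_ge0; have sP := stoch_Psig opt_policy.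
apply: (discounted_fixpoint_ge0 sP g01 (x := fun u => 1 - (1 - g) * V u)
   (d := fun u => (1 - g) * (1 - union_reward u (opt_policy u)))) => u.
  by rewrite kmulD kmulC // kmulN kmulZ {1}opt_valueE; ring.
have /andP[_ r1] := union_reward_in01 u (opt_policy u).
by have /andP[_ g1] := g01; apply: mulr_ge0; lra.
Qed.

(* Policy improvement: a strictly better action at s would give a policy whose
   discounted value dominates V, strictly at s, contradicting the maximality of
   opt_policy. *)
Lemma opt_value_bellman s b :
  union_reward s b + g * \sum_(y : S) union_kernel s b y * V y <= V s.
Proof.
rewrite leNgt; apply/negP => hlt.
set sig := [ffun x => if x == s then b else opt_policy x].
have sP := stoch_Psig sig.
set d := fun u => union_reward u (sig u) + g * kmul (Psig sig) V u - V u.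
have d0 u : 0 <= d u.
  rewrite /d /kmul /pker ffunE; case: eqP => [->|/eqP _]; first by rewrite subr_ge0 ltW.
  by rewrite [X in _ - X]opt_valueE subrr.
have ds : 0 < d s by rewrite /d /kmul /pker ffunE eqxx subr_gt0.
set x := fun u => disc_value sig u - V u.
have xE u : x u = d u + g * kmul (Psig sig) x u.
  by rewrite /x /d {1}disc_valueE kmulD kmulN; ring.
have x0 := discounted_fixpoint_ge0 sP g01 xE d0.
have xs : 0 < x s.
  rewrite xE; apply: lt_le_trans ds _; rewrite lerDl.
  by apply: mulr_ge0; [case/andP: g01 | apply: kmul_ge].
have := opt_policy_max sig; apply/negP; rewrite -ltNge -subr_gt0 -sumrB (bigD1 s) //=.
by apply: lt_le_trans xs _; rewrite lerDl; apply: sumr_ge0 => u _; apply: x0.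
Qed.

Lemma opt_value_bellman_t t x a : (1 <= t <= T)%N ->
  r t x a + g * \sum_(y : S) p t x a y * V y <= V x.
Proof.
case/andP => t1 tT; have lt : (t.-1 < T)%N by rewrite prednK.
by have := opt_value_bellman x (a, Ordinal lt); rewrite /union_reward /union_kernel /= prednK.
Qed.

Lemma opt_value_span s s' : V s' - V s <= D.
Proof.
have t0 := ltn0Sn b0.2.
apply: (diameter_span (rp_t t0).2 (diameter_t t0) opt_value_ge0 opt_value_le) => y a.
have := opt_value_bellman y (a, b0.2); rewrite /union_reward /union_kernel /=.
by have /andP[r0 _] := (rp_t t0).1 y a; lra.
Qed.

Lemma exp_return_le (pi : hpolicy) m M : is_hpolicy pi ->
  (forall y, m <= V y) -> (forall y, V y <= M) ->
  forall n t h x, (1 <= t)%N -> (t + n <= T.+1)%N ->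
  exp_return r p pi n t h x <= V x - m + n%:R * ((1 - g) * M).
Proof.
move=> hp mV VM; elim=> [|n IH] t h x t1 tn /=; first by rewrite mul0r addr0 subr_ge0.
have tT : (t <= T)%N by move: tn; rewrite addnS ltnS => /(leq_trans (leq_addr _ _)).
have [_ kt] := rp_t t1; have [pi0 pi1] := hp h x.
set c := (1 - g) * M.
suff bound_a a : r t x a + \sum_y p t x a y * exp_return r p pi n t.+1 (rcons h (x, a)) y
                 <= V x - m + n.+1%:R * c.
  apply: le_trans (_ : \sum_a pi h x a * (V x - m + n.+1%:R * c) <= _).
    by apply: ler_sum => a _; apply: ler_wpM2l.
  by rewrite -mulr_suml pi1 mul1r.
have [p0 p1] := kt x a.
have IHa : \sum_y p t x a y * exp_return r p pi n t.+1 (rcons h (x, a)) y <=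
           \sum_y p t x a y * V y - m + n%:R * c.
  have -> : \sum_y p t x a y * V y - m + n%:R * c =
            \sum_y p t x a y * (V y - m + n%:R * c).
    rewrite -addrA -[in X in X = _](mul1r (- m + _)) -p1 mulr_suml -big_split /=.
    by apply: eq_bigr => y _; ring.
  by apply: ler_sum => y _; apply: ler_wpM2l => //; apply: IH; rewrite ?addSnnS.
have PVM : (1 - g) * \sum_y p t x a y * V y <= c.
  apply: ler_wpM2l; first by case/andP: g01 => _; lra.
  rewrite -[M]mul1r -p1 mulr_suml; apply: ler_sum => y _; exact: ler_wpM2l.
have := opt_value_bellman_t x a (introT andP (conj t1 tT)).
by move: IHa PVM; rewrite mulrSr; lra.
Qed.

(* At s, the action chosen by opt_policy is played as in the M_t it comes from, every other
   action as in M_1; each state-action pair thus comes from some M_t, which makes the glued MDP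
   plausible. *)
Definition mix_index (s : S) (a : A) : nat :=
  if a == (opt_policy s).1 then (opt_policy s).2.+1 else 1.
Definition mix_reward (s : S) (a : A) : R := r (mix_index s a) s a.
Definition mix_kernel (s : S) (a : A) (y : S) : R := p (mix_index s a) s a y.
Definition mix_policy (s : S) : A := (opt_policy s).1.

Lemma mix_index_range s a : (1 <= mix_index s a <= T)%N.
Proof.
rewrite /mix_index; case: ifP => _ /=; first by rewrite ltn_ord.
exact: leq_ltn_trans (leq0n _) (ltn_ord b0.2).
Qed.

Lemma mix_reward_is_reward : is_reward mix_reward.
Proof. by move=> s a; apply: (rp_t (proj1 (andP (mix_index_range s a)))).1. Qed.

Lemma mix_kernel_is_kernel : is_kernel mix_kernel.
Proof. by move=> s a; apply: (rp_t (proj1 (andP (mix_index_range s a)))).2. Qed.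

Lemma pker_mix : pker mix_kernel mix_policy = pker union_kernel opt_policy.
Proof. by rewrite /pker /mix_kernel /mix_policy /mix_index /union_kernel; under eq_fun do rewrite eqxx. Qed.

Lemma gain_mix_ge m s1 : (forall y, m <= V y) ->
  (1 - g) * m <= gain mix_reward mix_kernel mix_policy s1.
Proof.
move=> mV; have kq := mix_kernel_is_kernel.
apply: (gain_ge (K := D)) => // n; set c := (1 - g) * m.
have expectC t : expect mix_kernel mix_policy s1 t (fun=> c) = c.
  by apply: expect_harmonic => s; rewrite kmulC //; apply: stoch_pker.
set E := expect mix_kernel mix_policy s1.
have step t : E t V - E t.+1 V + c <= E t (fun s => mix_reward s (mix_policy s)).
  have -> : E t V - E t.+1 V + c =
      E t (fun s => V s + (- kmul (pker mix_kernel mix_policy) V s + c)).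
    by rewrite /E !expectD expectN expectS addrA expectC.
  apply: ler_expect => // s.
  have -> : mix_reward s (mix_policy s) = union_reward s (opt_policy s).
    by rewrite /mix_reward /mix_policy /mix_index eqxx.
  have : m <= kmul (pker union_kernel opt_policy) V s by apply: kmul_ge => //; apply: stoch_Psig.
  have := opt_valueE s; rewrite pker_mix /c; have /andP[_ g1] := g01; nra.
have tel : \sum_(0 <= t < n) (E t V - E t.+1 V) = V s1 - E n V.
  rewrite /E -(expect0 mix_kernel mix_policy s1 V) -opprB.
  rewrite -(telescope_sumr (fun k => expect mix_kernel mix_policy s1 k V) (leq0n n)) -sumrN.
  by apply: eq_bigr => t _; rewrite opprB.
have EnV : E n V <= V s1 + D.
  by apply: expect_le => // y; rewrite -lerBlDl; apply: opt_value_span.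
apply: le_trans (ler_sum_nat (fun t _ => step t)); rewrite big_split /= tel.
rewrite sumr_const_nat subn0 mulr_natl; lra.
Qed.

Variables (delta Vr Vp : R) (st : nat -> S) (act : nat -> A) (rew : nat -> R) (tk : nat).
Hypothesis M_t_plausible : forall t : nat, (1 <= t <= T)%N ->
  plausible delta Vr Vp st act rew tk (r t) (p t).

Lemma mix_plausible : plausible delta Vr Vp st act rew tk mix_reward mix_kernel.
Proof.
split; first exact: mix_reward_is_reward.
split; first exact: mix_kernel_is_kernel.
by move=> s a; apply: (M_t_plausible (mix_index_range s a)).2.2.
Qed.

Lemma rho_tilde_ge m s1 : (forall y, m <= V y) ->
  (1 - g) * m <= rho_tilde delta Vr Vp st act rew tk s1.
Proof.
move=> mV; apply: le_trans (gain_mix_ge s1 mV) _.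
have ub01 (E : set R) : (forall x, E x -> 0 <= x <= 1) -> has_ubound E.
  by move=> E01; exists 1 => x /E01 /andP[].
apply: le_trans (_ : rho_star mix_reward mix_kernel s1 <= _).
  apply: ub_le_sup; last by exists mix_policy.
  by apply: ub01 => _ [pi _ <-]; apply: gain_in01; [exact: mix_reward_is_reward | exact: mix_kernel_is_kernel].
apply: ub_le_sup; last by exists (mix_reward, mix_kernel) => //; exact: mix_plausible.
by apply: ub01 => _ [[r' p'] [rr' [kp' _]] <-]; apply: rho_star_in01.
Qed.

Lemma vstar_le_discounted s s1 :
  vstar r p T s <= T%:R * rho_tilde delta Vr Vp st act rew tk s1 + D + T%:R * ((1 - g) * D).
Proof.
have [smin minP] := ex_argmin V s; set m := V smin.
have g1 : 0 <= 1 - g by case/andP: g01 => _; lra.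
have D0 : 0 <= D := diameter_ge0 (diameter_t (ltn0Sn 0)).
have VM y : V y <= m + D by rewrite -lerBlDl; apply: opt_value_span.
have ret : vstar r p T s <= V s - m + T%:R * ((1 - g) * (m + D)).
  apply: sup_le_nonneg => [_ [pi hp <-]|].
    by apply: (exp_return_le hp minP VM); rewrite ?add1n.
  apply: addr_ge0; first by rewrite subr_ge0.
  have m0 : 0 <= m := opt_value_ge0 smin.
  by rewrite mulr_ge0 ?ler0n // mulr_ge0 // addr_ge0.
have Tm : T%:R * ((1 - g) * m) <= T%:R * rho_tilde delta Vr Vp st act rew tk s1.
  by apply/ler_wpM2l/rho_tilde_ge => //; apply: ler0n.
have span : V s - m <= D := opt_value_span smin s.
by move: ret Tm; rewrite mulrDr mulrDr; lra.
Qed.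

End UnionMDP.

Lemma vstar_no_action (R : realType) (S A : finType) (r : nat -> S -> A -> R)
    (p : nat -> S -> A -> S -> R) (T : nat) (s : S) :
  (A -> False) -> vstar r p T s = 0.
Proof.
move=> noA; rewrite /vstar; suff -> : [set exp_return r p pi T 1 [::] s | pi in is_hpolicy] = set0.
  exact: sup0.
apply/seteqP; split => // x [pi hp _]; have [_] := hp [::] s.
by rewrite big_pred0 => [/eqP|a]; [rewrite eq_sym oner_eq0 | case: (noA a)].
Qed.

Lemma rho_tilde_ge0 (R : realType) (S A : finType) (delta Vr Vp : R) (st : nat -> S)
    (act : nat -> A) (rew : nat -> R) (tk : nat) (s1 : S) :
  0 <= rho_tilde delta Vr Vp st act rew tk s1.
Proof. by apply: sup_ge0 => _ [[r p] [rr [kp _]] <-]; apply: rho_star_in01. Qed.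


Theorem lemma6 (R : realType) (S A : finType)
  (r : nat -> S -> A -> R) (p : nat -> S -> A -> S -> R) (s1 : S) (D : R)
  (delta Vr Vp : R) (T : nat)
  (st : nat -> S) (act : nat -> A) (rew : nat -> R) (tk : nat) :
  (forall t : nat, (0 < t)%N ->
     [/\ is_reward (r t), is_kernel (p t), communicating (p t)
       & (diameter (p t) <= D%:E)%E]) ->
  0 < delta < 1 -> 0 <= Vr -> 0 <= Vp ->
  st 1%N = s1 -> (forall tau : nat, 0 <= rew tau <= 1) ->
  (1 <= tk <= T)%N ->
  (forall tau : nat, (1 <= tau <= T)%N ->
     plausible delta Vr Vp st act rew tk (r tau) (p tau)) ->
  forall s : S,
    vstar r p T s <= T%:R * rho_tilde delta Vr Vp st act rew tk s1 + D.
Proof.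
move=> M_t _ _ _ _ _ /andP[tk1 tkT] M_t_plausible s.
have rp_t t (t0 : (0 < t)%N) : is_reward (r t) /\ is_kernel (p t) by case: (M_t t t0).
have diameter_t t (t0 : (0 < t)%N) : (diameter (p t) <= D%:E)%E by case: (M_t t t0).
have D0 : 0 <= D := diameter_ge0 (diameter_t 1%N isT).
case: (pickP (@predT A)) => [a0 _ | noA]; last first.
  rewrite vstar_no_action; last by move=> a; have := noA a.
  by rewrite addr_ge0 // mulr_ge0 ?ler0n ?rho_tilde_ge0.
have b0 : A * 'I_T := (a0, Ordinal (leq_trans tk1 tkT)).
apply: (le_of_le_add_invn (c := T%:R * D)) => k.
have k0 : (0 : R) < k.+1%:R by rewrite ltr0n.
have g01 : 0 <= 1 - (k.+1%:R : R)^-1 < 1.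
  by rewrite subr_ge0 invf_le1 // ler1n /= gtrBl invr_gt0 k0.
have := vstar_le_discounted rp_t diameter_t g01 b0 M_t_plausible s s1.
have -> : 1 - (1 - (k.+1%:R : R)^-1) = k.+1%:R^-1 by rewrite opprB addrCA subrr addr0.
by rewrite [T%:R * (_ * D)]mulrCA [_^-1 * _]mulrC.
Qed.
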